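(* (1) Let $I=(\mathcal{M},[N],(u_i)_{i\in[N]})$ be a non-negative instance. Then $\frac23\le\lambda^I\le\infty$, and $\lambda^I=\infty$ if and only if $MmS_{u_i}^N(\mathcal{M})=0$ for all $i\in[N]$. (2) Let $I=(\mathcal{M},[N],(d_i)_{i\in[N]})$ be a non-positive instance. Then $0\le\lambda^I\le2$, and $\lambda^I=0$ if $MmS_{d_i}^N(\mathcal{M})=0$ for some $i\in[N]$.
   Context: An instance: finite item set $\mathcal{M}$, agents $[N]=\{1,\dots,N\}$, additive utilities $v_i$, either all item values $\ge0$ (non-negative instance, goods) or all $\le0$ (non-positive instance, chores). $\Pi_N(\mathcal{M})$ is the set of ordered $N$-partitions of $\mathcal{M}$ (parts may be empty); $MmS_{v}^N(\mathcal{M}):=\max_{(S_1,\ldots,S_N)\in\Pi_N(\mathcal{M})}\min_{j} v(S_j)$. For $\lambda\in\mathbb{R}$, an allocation $S\in\Pi_N(\mathcal{M})$ solves the $\lambda$-max-min problem for the instance iff $v_i(S_i)\ge\lambda\cdot MmS_{v_i}^N(\mathcal{M})$ for all $i$. The optimal MmS ratio $\lambda^I$ is: for a non-negative instance, the maximal $\lambda\in[0,\infty]$ for which the $\lambda$-max-min problem has a solution (with $\lambda^I=\infty$ meaning a solution exists for every real $\lambda$); for a non-positive instance, the minimal $\lambda\in[0,\infty)$ for which the $\lambda$-max-min problem has a solution. *)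

From HB Require Import structures.
From mathcomp Require Import all_boot all_order all_algebra.
Set Implicit Arguments. Unset Strict Implicit. Unset Printing Implicit Defensive.
Import Order.TTheory GRing.Theory Num.Theory.
Local Open Scope ring_scope.

(* Items: a finite type M.  Agents: 'I_N.  An ordered N-partition
   (S_1,...,S_N) of M (parts may be empty) is encoded by the assignment
   f : {ffun M -> 'I_N}, with S_j = [set x | f x == j]. *)

Definition bundle_val (R : realFieldType) (M : finType) (N : nat)
  (v : M -> R) (f : {ffun M -> 'I_N}) (j : 'I_N) : R :=
  \sum_(x : M | f x == j) v x.

Definition vbound (R : realFieldType) (M : finType) (v : M -> R) : R :=
  \sum_(x : M) `|v x|.

(* min_j v(S_j)   (well defined for N > 0, vbound is an upper bound) *)
Definition min_bundle (R : realFieldType) (M : finType) (N : nat)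
  (v : M -> R) (f : {ffun M -> 'I_N}) : R :=
  \big[Num.min/vbound v]_(j : 'I_N) bundle_val v f j.

(* MmS_v^N(M) = max over ordered N-partitions of min_j v(S_j)
   (-vbound is a lower bound for every min_bundle when N > 0) *)
Definition MmS (R : realFieldType) (M : finType) (N : nat) (v : M -> R) : R :=
  \big[Num.max/ - vbound v]_(f : {ffun M -> 'I_N}) min_bundle v f.

Definition solves (R : realFieldType) (M : finType) (N : nat)
  (u : 'I_N -> M -> R) (lam : R) (f : {ffun M -> 'I_N}) : Prop :=
  forall i : 'I_N, lam * MmS N (u i) <= bundle_val (u i) f i.

Definition solvable (R : realFieldType) (M : finType) (N : nat)
  (u : 'I_N -> M -> R) (lam : R) : Prop :=
  exists f : {ffun M -> 'I_N}, solves u lam f.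

Definition nonneg_instance (R : realFieldType) (M : finType) (N : nat)
  (u : 'I_N -> M -> R) : Prop := forall i x, 0 <= u i x.

Definition nonpos_instance (R : realFieldType) (M : finType) (N : nat)
  (u : 'I_N -> M -> R) : Prop := forall i x, u i x <= 0.

(* lambda^I for a non-negative instance, as a value in [0, oo]:
   None = oo (solvable for every real lambda);
   Some l = l is the maximum of the lambdas in [0,oo) with a solution. *)
Definition opt_ratio_nonneg (R : realFieldType) (M : finType) (N : nat)
  (u : 'I_N -> M -> R) (l : option R) : Prop :=
  match l with
  | None => forall lam : R, solvable u lam
  | Some l => [/\ 0 <= l, solvable u l &
               forall lam : R, 0 <= lam -> solvable u lam -> lam <= l]
  end.

Definition opt_ratio_nonpos (R : realFieldType) (M : finType) (N : nat)
  (u : 'I_N -> M -> R) (l : R) : Prop :=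
  [/\ 0 <= l, solvable u l &
      forall lam : R, 0 <= lam -> solvable u lam -> l <= lam].

From HB Require Import structures.
From mathcomp Require Import all_boot all_order all_algebra.
From mathcomp Require Import zify lra.
Set Implicit Arguments. Unset Strict Implicit. Unset Printing Implicit Defensive.
Import Order.TTheory GRing.Theory Num.Theory.
Local Open Scope ring_scope.

(* The set of allocations is finite, so the optimal ratio is attained, and it
   suffices to exhibit one allocation guaranteeing each agent [2/3] of her
   maximin share (goods), resp. at most twice her share (chores).

   Both are first proved for instances in which all agents rank the items in
   the same order, where an allocation is a map from ranks to agents.  For a
   general instance, let the agents pick in rank order, each taking her most
   valuable remaining item: at step [t] fewer than [t] items are gone, so she
   gets at least the value of her [t]-th best item.

   Goods, by induction on the number [n] of agents: if somebody values the top
   item, or the two items of rank [n] and [n + 1], at [2/3] of her share, she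
   receives them and the other agents can still split the remaining items into
   [n - 1] bundles worth their share.  Otherwise every item is worth less than
   [2/3] of every share and every item beyond the first [n] less than [1/3];
   starting from a top item, add small items to a bag until some agent values
   it at [2/3] of her share.  Nobody else then values it above her share.

   Chores: under round-robin each item of an agent is at least as valuable as
   the [N] items that follow, so her bundle is worth at least [1/N] of the
   whole plus one last item, i.e. at least twice her (non-positive) share. *)

Section SeqSums.
Variable R : numDomainType.

Lemma ler_sum_subpred (T : Type) (s : seq T) (P Q : pred T) (F : T -> R) :
  (forall x, Q x -> P x) -> (forall x, P x -> 0 <= F x) ->
  \sum_(x <- s | Q x) F x <= \sum_(x <- s | P x) F x.
Proof.
move=> QP F_ge0; rewrite [X in X <= _]big_mkcond [X in _ <= X]big_mkcond /=.
apply: ler_sum => x _; case Qx: (Q x); first by rewrite (QP _ Qx).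
by case Px: (P x) => //; apply: F_ge0.
Qed.

Lemma sum_mem_sub (T : eqType) (s X : seq T) (F : T -> R) :
  uniq s -> uniq X -> {subset X <= s} ->
  \sum_(x <- s | x \in X) F x = \sum_(x <- X) F x.
Proof.
move=> us uX sXs; rewrite -big_filter; apply/perm_big/uniq_perm => //.
  by rewrite filter_uniq.
by move=> x; rewrite mem_filter andb_idr //; apply: sXs.
Qed.

Lemma sumID_mem_sub (T : eqType) (s X : seq T) (F : T -> R) :
  uniq s -> uniq X -> {subset X <= s} ->
  \sum_(x <- s) F x = \sum_(x <- X) F x + \sum_(x <- s | x \notin X) F x.
Proof. by move=> us uX sXs; rewrite (bigID (mem X)) /= sum_mem_sub. Qed.

Lemma ler_sum_const_size (T : eqType) (s : seq T) (F : T -> R) c :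
  (forall x, x \in s -> F x <= c) -> \sum_(x <- s) F x <= (size s)%:R * c.
Proof.
elim: s => [|y s IH] Fc; first by rewrite big_nil mul0r.
rewrite big_cons /= -add1n natrD mulrDl mul1r lerD ?Fc ?mem_head // IH // => x xs.
by rewrite Fc // inE xs orbT.
Qed.

Definition nonincr_by (T : Type) (w : T -> R) : rel T := fun x y => w y <= w x.

Lemma nonincr_by_trans (T : Type) (w : T -> R) : transitive (nonincr_by w).
Proof. by move=> y x z xy yz; apply: le_trans yz xy. Qed.

Lemma sorted_nonincr_nth (T : Type) (x0 : T) (w : T -> R) s p q :
  sorted (nonincr_by w) s -> (p <= q < size s)%N -> w (nth x0 s q) <= w (nth x0 s p).
Proof.
move=> ss /andP [pq qs].
by apply: (sorted_leq_nth (@nonincr_by_trans T w) (fun x => lexx (w x))) => //; rewrite inE; lia.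
Qed.

End SeqSums.

Definition transp (x y z : nat) := if z == x then y else if z == y then x else z.

Lemma transpL x y : transp x y x = y.
Proof. by rewrite /transp eqxx. Qed.

Lemma transpR x y : transp x y y = x.
Proof. by rewrite /transp; case: eqVneq => [->|]; rewrite ?eqxx. Qed.

Lemma transpD x y z : z != x -> z != y -> transp x y z = z.
Proof. by rewrite /transp => /negbTE -> /negbTE ->. Qed.

Lemma transpK x y : involutive (transp x y).
Proof.
move=> z; case: (eqVneq z x) => [->|zx]; first by rewrite transpL transpR.
case: (eqVneq z y) => [->|zy]; first by rewrite transpR transpL.
by rewrite !transpD.
Qed.

Lemma transp_eq x y a b : (transp x y a == b) = (a == transp x y b).
Proof. by rewrite -{1}(transpK x y b) (can_eq (transpK x y)). Qed.

Lemma pigeonhole_nth (f : nat -> nat) (s : seq nat) k :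
  (forall x, f x < k.+1)%N -> (k.+1 < size s)%N ->
  exists p q, [/\ (p < q)%N, (q <= k.+1)%N & f (nth 0 s p) = f (nth 0 s q)].
Proof.
move=> f_lt s_gt; set l := map f (take k.+2 s).
have size_l : size l = k.+2 by rewrite size_map size_takel.
have : ~~ uniq l.
  apply/negP => ul; have sub : {subset l <= iota 0 k.+1}.
    by move=> z /mapP [w _ ->]; rewrite mem_iota add0n f_lt.
  by have := uniq_leq_size ul sub; rewrite size_iota size_l ltnn.
case/(uniqPn 0) => p [q [pq]]; rewrite size_l => q_lt.
rewrite !(nth_map 0) ?size_takel ?nth_take //; try lia.
by move=> e; exists p, q; split=> //; lia.
Qed.

Section Partitions.
Variable R : realFieldType.
Implicit Types (v : nat -> R) (s : seq nat) (mu : R).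

Definition partitionable v s n mu :=
  exists f : nat -> nat, forall j, (j < n)%N -> mu <= \sum_(x <- s | f x == j) v x.

Lemma partitionable_total v s n mu : (forall x, 0 <= v x) ->
  partitionable v s n mu -> n%:R * mu <= \sum_(x <- s) v x.
Proof.
move=> v_ge0 [f fP].
have : \sum_(j < n) mu <= \sum_(j < n) \sum_(x <- s | f x == j) v x.
  by apply: ler_sum => j _; apply: fP.
rewrite sumr_const card_ord mulr_natl => /le_trans; apply.
under eq_bigr do rewrite big_mkcond.
rewrite exchange_big /=; apply: ler_sum => x _.
have [fx_lt|fx_ge] := ltnP (f x) n.
  rewrite (bigD1 (Ordinal fx_lt)) //= eqxx big1 ?addr0 // => j.
  by rewrite -val_eqE /= eq_sym => /negbTE ->.
by rewrite big1 // => j _; case: eqP => // fxj; move: (ltn_ord j); rewrite -fxj ltnNge fx_ge.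
Qed.

Lemma partitionable_bounded v s n mu : (forall x, 0 <= v x) ->
  partitionable v s n.+1 mu ->
  exists f : nat -> nat, (forall x, f x < n.+1)%N /\
     forall j, (j < n.+1)%N -> mu <= \sum_(x <- s | f x == j) v x.
Proof.
move=> v_ge0 [f fP]; exists (fun x => if (f x < n.+1)%N then f x else 0%N).
split=> [x|j jn]; first by case: ifP.
apply: le_trans (fP j jn) _; apply: ler_sum_subpred => // x /eqP ->.
by rewrite jn.
Qed.

(* Relabelling by the transposition of [j0] and [k] discards the bundle [j0]. *)
Lemma partitionable_drop v s k mu (f : nat -> nat) j0 (X : seq nat) :
  (forall j, (j < k.+1)%N -> j != j0 -> mu <= \sum_(x <- s | f x == j) v x) ->
  (forall x, x \in X -> f x = j0) ->
  partitionable v [seq x <- s | x \notin X] k mu.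
Proof.
move=> fP fX; exists (fun x => transp j0 k (f x)) => j jk.
have [j'_ne j'_lt] : transp j0 k j != j0 /\ (transp j0 k j < k.+1)%N.
  case: (eqVneq j j0) => [jj0|jj0]; first by rewrite jj0 transpL; split=> //; apply/eqP; lia.
  have jk' : j != k by apply/eqP; lia.
  by rewrite transpD //; split=> //; lia.
rewrite big_filter_cond (eq_bigl (fun x => f x == transp j0 k j)) ?fP // => x.
rewrite transp_eq andb_idl // => /eqP fxj; apply/negP => /fX fxj0.
by move: j'_ne; rewrite -fxj fxj0 eqxx.
Qed.

Lemma ler_sum_transp v s (f : nat -> nat) x y j :
  uniq s -> x \in s -> y \in s -> v x <= v y -> j != f y ->
  \sum_(z <- s | f z == j) v z <= \sum_(z <- s | f (transp x y z) == j) v z.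
Proof.
move=> us xs ys vxy jfy.
have s_perm : perm_eq s (map (transp x y) s).
  apply: uniq_perm => //; first by rewrite (map_inj_uniq (can_inj (transpK x y))).
  move=> z; rewrite -[in RHS](transpK x y z) (mem_map (can_inj (transpK x y))).
  case: (eqVneq z x) => [->|zx]; first by rewrite transpL xs ys.
  by case: (eqVneq z y) => [->|zy]; rewrite ?transpR ?transpD ?xs ?ys.
rewrite [X in _ <= X](perm_big _ s_perm) big_map.
under [X in _ <= X]eq_bigl do rewrite transpK.
apply: ler_sum => z /eqP fzj; case: (eqVneq z x) => [->|zx]; first by rewrite transpL.
case: (eqVneq z y) => [zy|zy]; last by rewrite transpD.
by move: jfy; rewrite -fzj zy eqxx.
Qed.

Lemma partitionable_drop_item v s k mu x :
  partitionable v s k.+1 mu -> partitionable v [seq y <- s | y \notin [:: x]] k mu.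
Proof.
move=> [f fP]; apply: (partitionable_drop (f := f) (j0 := f x)).
  by move=> j jk _; apply: fP.
by move=> y; rewrite inE => /eqP ->.
Qed.

(* Two of the [k + 2] most valuable items share a bundle; exchanging them with the
   items at positions [k] and [k + 1] yields a partition in which these two items
   share a bundle and the other bundles did not lose value. *)
Lemma partitionable_drop_pair v s k mu : (forall x, 0 <= v x) -> uniq s ->
  sorted (nonincr_by v) s ->
  (k.+1 < size s)%N -> partitionable v s k.+1 mu ->
  partitionable v [seq x <- s | x \notin [:: nth 0 s k; nth 0 s k.+1]] k mu.
Proof.
move=> v_ge0 us ss sk /(partitionable_bounded v_ge0) [f [f_lt fP]].
have v_sorted p q : (p <= q < size s)%N -> v (nth 0 s q) <= v (nth 0 s p).
  exact: sorted_nonincr_nth.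
have [p [q [pq qk fpq]]] := pigeonhole_nth f_lt sk.
have nth_neq p' q' : (p' < size s)%N -> (q' < size s)%N -> p' != q' ->
  nth 0 s p' != nth 0 s q' by move=> *; rewrite nth_uniq.
have nth_in p' : (p' < size s)%N -> nth 0 s p' \in s by apply: mem_nth.
set xk := nth 0 s k; set xk1 := nth 0 s k.+1; set yp := nth 0 s p.
set y := if q == k then yp else nth 0 s q.
set f1 := fun z => f (transp xk yp z); set f2 := fun z => f1 (transp xk1 y z).
have f1y : f1 y = f yp.
  rewrite /f1 /y; case: (eqVneq q k) => [qk'|qk']; first by rewrite transpR /xk -qk' -fpq.
  by rewrite transpD ?fpq //; apply: nth_neq => //; lia.
have yxk : y != xk by rewrite /y; case: (eqVneq q k) => qk'; apply: nth_neq => //; lia.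
have ys : y \in s by rewrite /y; case: (q == k); apply: nth_in; lia.
apply: (partitionable_drop (f := f2) (j0 := f yp)) => [j jk jfy|x].
  apply: le_trans (fP j jk) _; apply: le_trans (_ : _ <= \sum_(z <- s | f1 z == j) v z) _.
    by apply: ler_sum_transp => //; [apply: nth_in; lia|apply: nth_in; lia|apply: v_sorted; lia].
  apply: ler_sum_transp; rewrite ?f1y //; first by apply: nth_in.
  by rewrite /y; case: (q == k); apply: v_sorted; lia.
rewrite !inE => /orP [] /eqP ->; last by rewrite /f2 transpL.
have xk_xk1 : xk != xk1 by apply: nth_neq; lia.
by rewrite /f2 /f1 (transpD xk_xk1) 1?eq_sym // transpL.
Qed.

End Partitions.

Section OrderedTwoThirds.
Variables (R : realFieldType) (A : eqType) (a0 : A).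
Variables (v : A -> nat -> R) (mu : A -> R).
Hypothesis v_ge0 : forall i x, 0 <= v i x.

Definition two_thirds_share (P : seq A) (s : seq nat) (g : nat -> A) :=
  forall i, i \in P -> 2 * mu i <= 3 * \sum_(x <- s | g x == i) v i x.

Lemma two_thirds_share_assign (P : seq A) (s X : seq nat) a g :
  uniq P -> uniq s -> uniq X -> {subset X <= s} -> a \in P ->
  2 * mu a <= 3 * \sum_(x <- X) v a x ->
  two_thirds_share (rem a P) [seq x <- s | x \notin X] g ->
  two_thirds_share P s (fun x => if x \in X then a else g x).
Proof.
move=> uP us uX sXs aP vaX gP i iP; case: (eqVneq i a) => [->|ia].
  apply: le_trans vaX _; rewrite ler_pM2l // -(sum_mem_sub _ us uX sXs).
  by apply: ler_sum_subpred => [x ->|x _]; rewrite ?eqxx.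
have iP' : i \in rem a P by rewrite (mem_rem_uniq _ uP) inE ia iP.
apply: le_trans (gP i iP') _; rewrite big_filter_cond.
rewrite (eq_bigl (fun x => (if x \in X then a else g x) == i)) // => x.
by case: (x \in X) => //=; rewrite eq_sym (negbTE ia).
Qed.

(* Take the shortest prefix of [L] after which some agent values the bag at [2/3]
   of her share: one item earlier, every agent valued it below [2/3] of hers. *)
Lemma fill_bag (P : seq A) (b L : seq nat) i1 : i1 \in P ->
  (forall i, i \in P -> \sum_(x <- b) v i x <= mu i) ->
  (forall i x, i \in P -> x \in L -> 3 * v i x <= mu i) ->
  2 * mu i1 <= 3 * \sum_(x <- b ++ L) v i1 x ->
  exists t c, [/\ c \in P, 2 * mu c <= 3 * \sum_(x <- b ++ take t L) v c x &
    forall i, i \in P -> \sum_(x <- b ++ take t L) v i x <= mu i].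
Proof.
move=> i1P b_le small i1_full.
pose full t := has (fun i => 2 * mu i <= 3 * \sum_(x <- b ++ take t L) v i x) P.
have full_L : full (size L) by apply/hasP; exists i1; rewrite ?take_size.
case: (ex_minnP (ex_intro full (size L) full_L)) => t /hasP [c cP c_full] t_min.
exists t, c; split=> // i iP; case: t t_min c_full => [|t] t_min _.
  by rewrite take0 cats0; apply: b_le.
have tL : (t < size L)%N by apply: t_min.
have /hasPn /(_ i iP) : ~~ full t by apply/negP => /t_min; rewrite ltnn.
rewrite (take_nth 0 tL) -cats1 catA !big_cat big_seq1 /= -ltNge.
have := small i _ iP (mem_nth 0 tL); lra.
Qed.

Section BagFilling.
Variables (k : nat) (P : seq A) (s big : seq nat).
Hypotheses (us : uniq s) (ubig : uniq big) (big_s : {subset big <= s}).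
Hypothesis big_k : (size big <= k.+1)%N.
Hypothesis mu_ge0 : forall i, i \in P -> 0 <= mu i.
Hypothesis total : forall i, i \in P -> k.+1%:R * mu i <= \sum_(x <- s) v i x.
Hypothesis big_le : forall i x, i \in P -> x \in s -> 3 * v i x <= 2 * mu i.
Hypothesis small : forall i x, i \in P -> x \in s -> x \notin big -> 3 * v i x <= mu i.

Let L := [seq x <- s | x \notin big].

Lemma first_bag i1 : i1 \in P ->
  exists t c, [/\ c \in P, 2 * mu c <= 3 * \sum_(x <- take 1 big ++ take t L) v c x &
    forall i, i \in P -> \sum_(x <- take 1 big ++ take t L) v i x <= mu i].
Proof.
move=> i1P; have sum_big i : \sum_(x <- s) v i x = \sum_(x <- take 1 big) v i x
    + \sum_(x <- drop 1 big) v i x + \sum_(x <- L) v i x.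
  by rewrite (sumID_mem_sub _ us ubig big_s) -{1}(cat_take_drop 1 big) big_cat big_filter.
have sum_le_size i (X : seq nat) : i \in P -> {subset X <= big} ->
    3 * \sum_(x <- X) v i x <= (size X)%:R * (2 * mu i).
  move=> iP Xbig; suff /ler_sum_const_size : forall x, x \in X -> v i x <= 2 / 3 * mu i.
    by lra.
  by move=> x /Xbig /big_s /(big_le iP) ?; lra.
apply: (fill_bag i1P) => [i iP|i x iP|].
- have := sum_le_size i (take 1 big) iP (@mem_take 1 _ big).
  have : (size (take 1 big))%:R * (2 * mu i) <= 1 * (2 * mu i).
    by apply: ler_wpM2r; [have := mu_ge0 iP; lra|rewrite lern1 size_take_min geq_minl].
  have := mu_ge0 iP; lra.
- by rewrite mem_filter => /andP [/small]; apply.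
have := sum_le_size i1 (drop 1 big) i1P (@mem_drop 1 _ big).
have : (size (drop 1 big))%:R * (2 * mu i1) <= k%:R * (2 * mu i1).
  by apply: ler_wpM2r; [have := mu_ge0 i1P; lra|rewrite ler_nat size_drop; lia].
have := total i1P; have := mu_ge0 i1P => mu1_ge0.
have : 0 <= k%:R * mu i1 by rewrite mulr_ge0.
rewrite big_cat /= sum_big -[k.+1]addn1 natrD; lra.
Qed.

Lemma bag_uniq t : uniq (take 1 big ++ take t L).
Proof.
rewrite cat_uniq !take_uniq ?filter_uniq //= andbT; apply/hasPn => x /mem_take.
by rewrite mem_filter => /andP [x_big _]; apply: contra x_big => /mem_take.
Qed.

Lemma bag_sub t : {subset take 1 big ++ take t L <= s}.
Proof.
move=> x; rewrite mem_cat => /orP [/mem_take/big_s //|/mem_take].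
by rewrite mem_filter => /andP [].
Qed.

Lemma bag_disjoint t x : x \in drop 1 big -> x \notin take 1 big ++ take t L.
Proof.
move=> xbig; rewrite mem_cat negb_or; apply/andP; split.
  by move: ubig; rewrite -{1}(cat_take_drop 1 big) cat_uniq => /and3P [_ /hasPn /(_ x xbig)].
by apply/negP => /mem_take; rewrite mem_filter (mem_drop xbig).
Qed.

End BagFilling.

Lemma bag_filling n : forall (P : seq A) (s big : seq nat),
  size P = n -> uniq P -> uniq s -> uniq big -> {subset big <= s} -> (size big <= n)%N ->
  (forall i, i \in P -> 0 <= mu i) ->
  (forall i, i \in P -> n%:R * mu i <= \sum_(x <- s) v i x) ->
  (forall i x, i \in P -> x \in s -> 3 * v i x <= 2 * mu i) ->
  (forall i x, i \in P -> x \in s -> x \notin big -> 3 * v i x <= mu i) ->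
  exists g, two_thirds_share P s g.
Proof.
elim: n => [|k IH] P s big sizeP uP us ubig big_s big_k mu_ge0 total big_le small.
  by case: P sizeP {uP mu_ge0 total big_le small} => // _; exists (fun _ => a0).
have [i1 i1P] : exists i1, i1 \in P.
  by case: P sizeP {uP mu_ge0 total big_le small} => // i1 *; exists i1; rewrite mem_head.
have [t [c [cP c_full B_le]]] := first_bag us ubig big_s big_k mu_ge0 total big_le small i1P.
set B := take 1 big ++ _ in c_full B_le.
have uB : uniq B by apply: bag_uniq.
have B_s : {subset B <= s} by apply: bag_sub.
have [g gP] : exists g, two_thirds_share (rem c P) [seq x <- s | x \notin B] g.
  apply: (IH _ _ (drop 1 big)) => [||||x xbig||i|i|i x|i x].
  - by rewrite size_rem // sizeP.
  - exact: rem_uniq.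
  - exact: filter_uniq.
  - exact: drop_uniq.
  - by rewrite mem_filter bag_disjoint // (big_s _ (mem_drop xbig)).
  - by rewrite size_drop; lia.
  - by rewrite (mem_rem_uniq _ uP) => /andP [_ /mu_ge0].
  - rewrite (mem_rem_uniq _ uP) => /andP [_ iP]; have := total i iP.
    rewrite (sumID_mem_sub _ us uB B_s) big_filter -[k.+1]addn1 natrD.
    have := B_le i iP; lra.
  - by rewrite (mem_rem_uniq _ uP) mem_filter => /andP [_ iP] /andP [_ /big_le]; apply.
  - rewrite (mem_rem_uniq _ uP) mem_filter => /andP [_ iP] /andP [xB xs] xbig.
    apply: small => //; apply: contra xB; rewrite -{1}(cat_take_drop 1 big) mem_cat.
    by rewrite (negbTE xbig) orbF mem_cat => ->.
by exists (fun x => if x \in B then c else g x); apply: two_thirds_share_assign.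
Qed.

Lemma ordered_bag_filling k (P : seq A) (s : seq nat) :
  size P = k.+1 -> uniq P -> uniq s ->
  (forall i, i \in P -> 0 <= mu i) ->
  (forall i, i \in P -> sorted (nonincr_by (v i)) s) ->
  (forall i, i \in P -> partitionable (v i) s k.+1 (mu i)) ->
  (forall i, i \in P -> (0 < size s)%N -> 3 * v i (nth 0 s 0) < 2 * mu i) ->
  (forall i, i \in P -> (k.+1 < size s)%N ->
     3 * (v i (nth 0 s k) + v i (nth 0 s k.+1)) < 2 * mu i) ->
  exists g, two_thirds_share P s g.
Proof.
move=> sizeP uP us mu_ge0 sorted_s part no_top no_pair.
have v_le_nth i x p : i \in P -> x \in s -> (p <= index x s)%N -> v i x <= v i (nth 0 s p).
  move=> iP xs px; rewrite -{1}(nth_index 0 xs).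
  by apply: sorted_nonincr_nth (sorted_s i iP) _; rewrite px index_mem.
apply: (bag_filling (big := take k.+1 s) sizeP) => //; first exact: take_uniq.
- by move=> x /mem_take.
- by rewrite size_take_min geq_minl.
- by move=> i iP; apply: partitionable_total (part i iP).
- move=> i x iP xs; have s_gt0 : (0 < size s)%N by case: (s) xs.
  by have := v_le_nth i x 0%N iP xs (leq0n _); have := no_top i iP s_gt0; lra.
move=> i x iP xs xk1s; have k1x : (k.+1 <= index x s)%N.
  rewrite leqNgt; apply: contra xk1s => x_lt.
  by rewrite -(nth_index 0 xs) -(nth_take 0 x_lt) mem_nth // size_take_min leq_min x_lt index_mem.
have sk : (k.+1 < size s)%N by rewrite (leq_ltn_trans k1x) ?index_mem.
have := v_le_nth i x k.+1 iP xs k1x.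
have := v_le_nth i (nth 0 s k.+1) k iP (mem_nth 0 sk); rewrite index_uniq // => /(_ (leqnSn k)).
have := no_pair i iP sk; lra.
Qed.

Lemma ordered_two_thirds n : forall (P : seq A) (s : seq nat),
  size P = n -> uniq P -> uniq s ->
  (forall i, i \in P -> 0 <= mu i) ->
  (forall i, i \in P -> sorted (nonincr_by (v i)) s) ->
  (forall i, i \in P -> partitionable (v i) s n (mu i)) ->
  exists g, two_thirds_share P s g.
Proof.
elim: n => [|k IH] P s sizeP uP us mu_ge0 sorted_s part.
  by case: P sizeP {uP mu_ge0 sorted_s part} => // _; exists (fun _ => a0).
have remP a i : i \in rem a P -> i \in P by rewrite (mem_rem_uniq _ uP) => /andP [].
have assign a X : a \in P -> uniq X -> {subset X <= s} ->
    2 * mu a <= 3 * \sum_(x <- X) v a x ->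
    (forall i, i \in rem a P -> partitionable (v i) [seq x <- s | x \notin X] k (mu i)) ->
    exists g, two_thirds_share P s g.
  move=> aP uX sXs aX partX; have [g gP] := IH (rem a P) [seq x <- s | x \notin X]
    ltac:(by rewrite size_rem // sizeP) (rem_uniq _ uP) (filter_uniq _ us)
    (fun i iP => mu_ge0 i (remP a i iP))
    (fun i iP => sorted_filter (@nonincr_by_trans _ _ _) _ (sorted_s i (remP a i iP))) partX.
  by exists (fun x => if x \in X then a else g x); apply: two_thirds_share_assign.
have nth_in p : (p < size s)%N -> nth 0 s p \in s by apply: mem_nth.
set x0 := nth 0 s 0; set xk := nth 0 s k; set xk1 := nth 0 s k.+1.
case: (boolP ((0 < size s)%N && has (fun a => 2 * mu a <= 3 * v a x0) P)).
  case/andP => s_gt0 /hasP [a aP a_x0]; apply: (assign a [:: x0]) => //.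
  - by move=> x; rewrite inE => /eqP ->; apply: nth_in.
  - by rewrite big_seq1.
  - by move=> i /remP iP; apply: partitionable_drop_item (part i iP).
move=> no_top.
case: (boolP ((k.+1 < size s)%N && has (fun a => 2 * mu a <= 3 * (v a xk + v a xk1)) P)).
  case/andP => sk /hasP [a aP a_pair]; apply: (assign a [:: xk; xk1]) => //.
  - by rewrite /= inE andbT /xk /xk1 nth_uniq // ?neq_ltn ?ltnSn // ltnW.
  - by move=> x; rewrite !inE => /orP [] /eqP ->; apply: nth_in; lia.
  - by rewrite big_cons big_seq1.
  - by move=> i /remP iP; apply: partitionable_drop_pair (sorted_s i iP) sk (part i iP).
move=> no_pair; apply: ordered_bag_filling sizeP uP us mu_ge0 sorted_s part _ _ => i iP sk.
  by move: no_top; rewrite sk => /hasPn /(_ i iP); rewrite ltNge.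
by move: no_pair; rewrite sk => /hasPn /(_ i iP); rewrite ltNge.
Qed.

End OrderedTwoThirds.

Section RoundRobin.
Variables (R : realFieldType) (N : nat).
Hypothesis N_gt0 : (0 < N)%N.

(* Each block of [N] consecutive positions is dominated by [N] times its first
   entry; the last, incomplete block is paid for by the slack [N * c]. *)
Lemma round_robin_blocks (c : R) : c <= 0 -> forall K m (W : nat -> R), (m <= K)%N ->
  (forall d d', (d <= d')%N -> (d' < m)%N -> W d' <= W d) ->
  (forall d, (d < m)%N -> c <= W d <= 0) ->
  \sum_(d <- iota 0 m) W d + N%:R * c <= N%:R * \sum_(d <- iota 0 m | (N %| d)%N) W d.
Proof.
move=> c_le0; elim=> [|K IH] m W mK W_mono W_bnd.
  by move: mK; rewrite leqn0 => /eqP ->; rewrite !big_nil add0r mulr0 mulr_ge0_le0.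
have first_block n : (0 < n <= N)%N ->
    \sum_(d <- iota 0 n | (N %| d)%N) W d = W 0%N.
  case: n => // n /andP [_ nN]; rewrite /= big_cons dvdn0 big_seq_cond.
  rewrite big1 ?addr0 // => d /andP [+ Nd]; rewrite mem_iota => /andP [d_gt0 dn].
  by have := dvdn_leq d_gt0 Nd; lia.
have [mN|Nm] := leqP m N.
  case: m mK W_mono W_bnd mN first_block => [|m] mK W_mono W_bnd mN first_block.
    by rewrite !big_nil add0r mulr0 mulr_ge0_le0.
  rewrite first_block //.
  have : \sum_(d <- iota 0 m.+1) W d <= 0.
    by rewrite big_seq sumr_le0 // => d; rewrite mem_iota => /andP [_ dm]; case/andP: (W_bnd d dm).
  have : c <= W 0%N by case/andP: (W_bnd 0%N erefl).
  rewrite -(ler_pM2l (ltr0Sn R N.-1)) prednK // => ? ?; lra.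
rewrite -(subnKC (ltnW Nm)) iotaD !big_cat /= add0n first_block ?N_gt0 ?leqnn //.
have -> : iota N (m - N) = map (addn N) (iota 0 (m - N)) by rewrite -iotaDl addn0.
rewrite !big_map.
have -> : \sum_(j <- iota 0 (m - N) | (N %| N + j)%N) W (N + j)%N
    = \sum_(j <- iota 0 (m - N) | (N %| j)%N) W (N + j)%N.
  by apply: eq_bigl => j; rewrite dvdn_addr.
have block_le : \sum_(d <- iota 0 N) W d <= N%:R * W 0%N.
  rewrite -[X in X%:R * _](size_iota 0 N); apply: ler_sum_const_size => d.
  by rewrite mem_iota => /andP [_ dN]; apply: W_mono => //; lia.
have := IH (m - N)%N (fun d => W (N + d)%N) ltac:(lia).
move=> /(_ ltac:(move=> d d' dd' d'm; apply: W_mono; lia) ltac:(move=> d dm; apply: W_bnd; lia)).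
rewrite mulrDr; lra.
Qed.

Lemma round_robin_share (i : nat) m (w : nat -> R) (c : R) : (i < N)%N -> c <= 0 ->
  (forall t t', (t <= t')%N -> (t' < m)%N -> w t' <= w t) ->
  (forall t, (t < m)%N -> c <= w t <= 0) ->
  N%:R * c <= \sum_(t <- iota 0 m) w t ->
  2 * c <= \sum_(t <- iota 0 m | (t %% N == i)%N) w t.
Proof.
move=> iN c_le0 w_mono w_bnd total.
have before_i n : (n <= i)%N -> \sum_(t <- iota 0 n | (t %% N == i)%N) w t = 0.
  move=> ni; rewrite big_seq_cond big1 // => t /andP [+ /eqP ti].
  by rewrite mem_iota => /andP [_ tn]; move: ti; rewrite modn_small; lia.
have [mi|im] := leqP m i; first by rewrite before_i //; lra.
move: total; rewrite -(subnKC (ltnW im)) iotaD !big_cat /= before_i // add0r add0n.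
have -> : iota i (m - i) = map (addn i) (iota 0 (m - i)) by rewrite -iotaDl addn0.
rewrite !big_map.
have -> : \sum_(j <- iota 0 (m - i) | ((i + j) %% N == i)%N) w (i + j)%N
    = \sum_(j <- iota 0 (m - i) | (N %| j)%N) w (i + j)%N.
  by apply: eq_bigl => j; rewrite -{2}(modn_small iN) -{2}(addn0 i) eqn_modDl mod0n.
have : \sum_(t <- iota 0 i) w t <= 0.
  by rewrite big_seq sumr_le0 // => t; rewrite mem_iota => /andP [_ ti]; case/andP: (w_bnd t ltac:(lia)).
have := round_robin_blocks c_le0 (leqnn (m - i)) (W := fun d => w (i + d)%N)
  ltac:(move=> d d' dd' d'm; apply: w_mono; lia) ltac:(move=> d dm; apply: w_bnd; lia).
move=> blocks ? total; have : N%:R * (2 * c) <= N%:R * \sum_(j <- iota 0 (m - i) | (N %| j)%N) w (i + j)%N.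
  lra.
by rewrite ler_pM2l ?ltr0n.
Qed.

End RoundRobin.

Section ItemRanking.
Variables (R : realFieldType) (M : finType) (x0 : M).
Implicit Types (v : M -> R) (D : seq M).

Definition ranked_items v := sort (nonincr_by v) (index_enum M).

Definition rank_value v (t : nat) := v (nth x0 (ranked_items v) t).

Lemma size_index_enum : size (index_enum M) = #|M|.
Proof.
rewrite cardT; apply/perm_size/uniq_perm; rewrite ?index_enum_uniq ?enum_uniq //.
by move=> x; rewrite mem_index_enum mem_enum.
Qed.

Lemma ranked_items_perm v : perm_eq (ranked_items v) (index_enum M).
Proof. by rewrite /ranked_items perm_sort. Qed.

Lemma size_ranked_items v : size (ranked_items v) = #|M|.
Proof. by rewrite size_sort size_index_enum. Qed.

Lemma ranked_items_uniq v : uniq (ranked_items v).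
Proof. by rewrite (perm_uniq (ranked_items_perm v)) index_enum_uniq. Qed.

Lemma rank_value_nonincr v t t' : (t <= t')%N -> (t' < #|M|)%N -> rank_value v t' <= rank_value v t.
Proof.
move=> tt' t'M; apply: sorted_nonincr_nth; last by rewrite tt' size_ranked_items.
by apply: sort_sorted => x y; apply: le_total.
Qed.

Lemma sorted_rank_value v : sorted (nonincr_by (rank_value v)) (iota 0 #|M|).
Proof.
apply: (sub_in_sorted (P := mem (iota 0 #|M|))) (iota_sorted 0 #|M|) => [t t'|].
  by move=> _; rewrite mem_iota add0n => /andP [_ t'M] tt'; apply: rank_value_nonincr.
by apply/allP.
Qed.

Lemma sum_rank_value v (P : pred M) :
  \sum_(t <- iota 0 #|M| | P (nth x0 (ranked_items v) t)) rank_value v t = \sum_(x | P x) v x.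
Proof.
by rewrite -(perm_big _ (ranked_items_perm v)) (big_nth x0) size_ranked_items /index_iota subn0.
Qed.

(* The top [size D + 1] items cannot all be in [D]. *)
Lemma exists_unpicked_ge v D : (size D < #|M|)%N ->
  exists2 y, y \notin D & rank_value v (size D) <= v y.
Proof.
move=> DM; set l := take (size D).+1 (ranked_items v).
have size_l : size l = (size D).+1 by rewrite size_takel // size_ranked_items.
have /hasP [y yl yD] : has (fun y => y \notin D) l.
  apply: contraT; rewrite -all_predC => /allP l_D.
  have l_sub : {subset l <= D} by move=> y /l_D /=; rewrite negbK.
  have := uniq_leq_size (take_uniq _ (ranked_items_uniq v)) l_sub.
  by rewrite size_l ltnn.
exists y => //; have yl' : (index y l < (size D).+1)%N by rewrite -size_l index_mem.
rewrite -(nth_index x0 yl) nth_take //; apply: rank_value_nonincr; lia.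
Qed.

(* [w t] is the valuation of whoever picks at step [t]. *)
Lemma greedy_picks (w : nat -> M -> R) r : forall D, uniq D -> (size D + r <= #|M|)%N ->
  exists ps, [/\ size ps = r, uniq (D ++ ps) &
    forall t, (t < r)%N -> rank_value (w (size D + t)%N) (size D + t) <= w (size D + t)%N (nth x0 ps t)].
Proof.
elim: r => [|r IH] D uD DrM; first by exists [::]; rewrite cats0.
have DM : (size D < #|M|)%N by lia.
have [y yD y_ge] := exists_unpicked_ge (w (size D)) DM.
have uDy : uniq (D ++ [:: y]) by rewrite cat_uniq uD /= andbT orbF.
have DyrM : (size (D ++ [:: y]) + r <= #|M|)%N by rewrite size_cat /= addn1 addSn -addnS.
have [ps [size_ps uDps ps_ge]] := IH (D ++ [:: y]) uDy DyrM.
exists (y :: ps); split; first by rewrite /= size_ps.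
  by rewrite -cat1s catA.
case=> [|t] tr; first by rewrite addn0.
by have := ps_ge t tr; rewrite size_cat /= addn1 addSn -addnS.
Qed.

Lemma picking_allocation (N : nat) (u : 'I_N -> M -> R) (g : nat -> 'I_N) :
  exists F : {ffun M -> 'I_N}, forall i,
    \sum_(t <- iota 0 #|M| | g t == i) rank_value (u i) t <= bundle_val (u i) F i.
Proof.
have [ps [size_ps ups ps_ge]] := @greedy_picks (fun t => u (g t)) #|M| [::] erefl (leqnn _).
have ps_perm : perm_eq ps (index_enum M).
  apply: uniq_perm; rewrite ?index_enum_uniq //.
  have [] := uniq_min_size ups (fun y _ => mem_index_enum y) _; rewrite ?size_ps ?size_index_enum //.
exists [ffun x => g (index x ps)] => i.
rewrite /bundle_val -(perm_big _ ps_perm) (big_nth x0) size_ps /index_iota subn0.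
rewrite big_seq_cond [X in _ <= X]big_seq_cond.
rewrite [X in _ <= X](eq_bigl (fun t => (t \in iota 0 #|M|) && (g t == i))) => [|t]; last first.
  rewrite ffunE; case: (boolP (t \in _)) => //=; rewrite mem_iota add0n => /andP [_ tM].
  by rewrite index_uniq ?size_ps.
apply: ler_sum => t /andP [+ /eqP gti]; rewrite mem_iota add0n => /andP [_ tM].
by have := ps_ge t tM; rewrite gti.
Qed.

End ItemRanking.

Section MaxMinShare.
Variables (R : realFieldType) (M : finType) (N : nat).
Hypothesis N_gt0 : (0 < N)%N.
Implicit Types (v : M -> R) (f : {ffun M -> 'I_N}).

Lemma bundle_val_ge_vbound v f j : - vbound v <= bundle_val v f j.
Proof.
rewrite /bundle_val /vbound lerNl -sumrN.
apply: le_trans (_ : _ <= \sum_(x | f x == j) `|v x|) _.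
  by apply: ler_sum => x _; rewrite -normrN ler_norm.
by apply: ler_sum_subpred => // x _; apply: normr_ge0.
Qed.

Lemma min_bundle_le v f j : min_bundle v f <= bundle_val v f j.
Proof. exact: bigmin_le. Qed.

Lemma le_MmS v f : min_bundle v f <= MmS N v.
Proof. by apply: (le_bigmax_seq _ f) => //; rewrite mem_index_enum. Qed.

Lemma MmS_attained v : exists f, MmS N v = min_bundle v f.
Proof.
have min_ge f : - vbound v <= min_bundle v f.
  apply: le_bigmin => [|j _]; last exact: bundle_val_ge_vbound.
  by rewrite lerNl (le_trans _ (sumr_ge0 _ (fun x _ => normr_ge0 (v x)))) // oppr_le0 sumr_ge0.
have [f _ MmS_f] := @eq_bigmax _ _ _ _ [ffun=> Ordinal N_gt0] xpredT (min_bundle v) erefl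
  (fun f _ => min_ge f).
by exists f; rewrite /MmS MmS_f.
Qed.

Lemma MmS_ge0 v : (forall x, 0 <= v x) -> 0 <= MmS N v.
Proof.
move=> v_ge0; apply: le_trans (le_MmS v [ffun=> Ordinal N_gt0]).
apply: le_bigmin => [|j _]; first by apply: sumr_ge0 => x _; exact: normr_ge0.
by apply: sumr_ge0.
Qed.

Lemma MmS_le_item v : (forall x, v x <= 0) -> forall x, MmS N v <= v x.
Proof.
move=> v_le0 x; have [f ->] := MmS_attained v; apply: le_trans (min_bundle_le v f (f x)) _.
by rewrite /bundle_val (bigD1 x) //= -[X in _ <= X]addr0 lerD2l sumr_le0.
Qed.

Lemma MmS_le0 v : (forall x, v x <= 0) -> MmS N v <= 0.
Proof.
move=> v_le0; have [f ->] := MmS_attained v.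
by apply: le_trans (min_bundle_le v f (Ordinal N_gt0)) _; apply: sumr_le0.
Qed.

Lemma MmS_le_total v : N%:R * MmS N v <= \sum_x v x.
Proof.
have [f ->] := MmS_attained v; rewrite (partition_big f xpredT) //=.
apply: le_trans (_ : _ <= \sum_(j < N) min_bundle v f) (ler_sum _ _); last first.
  by move=> j _; apply: min_bundle_le.
by rewrite sumr_const card_ord mulr_natl.
Qed.

Lemma bundle_val_void v f j : #|M| = 0 -> bundle_val v f j = 0.
Proof. by move/card0_eq => M0; rewrite /bundle_val big_pred0 // => x; have := M0 x; rewrite !inE. Qed.

Lemma partitionable_MmS (x0 : M) v :
  partitionable (rank_value x0 v) (iota 0 #|M|) N (MmS N v).
Proof.
have [f ->] := MmS_attained v; exists (fun t => f (nth x0 (ranked_items v) t)) => j jN.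
apply: le_trans (min_bundle_le v f (Ordinal jN)) _.
by rewrite /bundle_val -(sum_rank_value x0 v (fun x => f x == Ordinal jN)).
Qed.

Lemma two_thirds_allocation (u : 'I_N -> M -> R) : nonneg_instance u ->
  exists F : {ffun M -> 'I_N}, forall i, 2 * MmS N (u i) <= 3 * bundle_val (u i) F i.
Proof.
move=> u_ge0; have [M0|/card_gt0P [x0 _]] := posnP #|M|.
  exists [ffun=> Ordinal N_gt0] => i; rewrite bundle_val_void // mulr0.
  have [f ->] := MmS_attained (u i); have := min_bundle_le (u i) f (Ordinal N_gt0).
  by rewrite bundle_val_void // => ?; lra.
have [g gP] := ordered_two_thirds (Ordinal N_gt0) (v := fun i => rank_value x0 (u i))
   (fun i t => u_ge0 i _)
   (size_enum_ord N) (enum_uniq _) (iota_uniq 0 #|M|) (fun i _ => MmS_ge0 (u_ge0 i))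
   (fun i _ => sorted_rank_value x0 (u i)) (fun i _ => partitionable_MmS x0 (u i)).
have [F FP] := picking_allocation x0 u g.
by exists F => i; apply: le_trans (gP i (mem_enum _ i)) _; rewrite ler_pM2l.
Qed.

Lemma twice_chores_allocation (d : 'I_N -> M -> R) : nonpos_instance d ->
  exists F : {ffun M -> 'I_N}, forall i, 2 * MmS N (d i) <= bundle_val (d i) F i.
Proof.
move=> d_le0; have [M0|/card_gt0P [x0 _]] := posnP #|M|.
  exists [ffun=> Ordinal N_gt0] => i; rewrite bundle_val_void //.
  by have := MmS_le0 (d_le0 i); lra.
have [F FP] := picking_allocation x0 d (fun t => Ordinal (ltn_pmod t N_gt0)).
exists F => i; apply: le_trans (FP i); rewrite (eq_bigl (fun t => t %% N == i)%N) //.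
apply: (round_robin_share N_gt0 (ltn_ord i)) (MmS_le0 (d_le0 i)) _ _ _.
- by move=> t t' tt' t'M; apply: rank_value_nonincr.
- by move=> t _; rewrite MmS_le_item ?d_le0.
- by rewrite (sum_rank_value x0 (d i) predT) MmS_le_total.
Qed.

End MaxMinShare.

Section OptimalRatio.
Variables (R : realFieldType) (M : finType) (N : nat).
Hypothesis N_gt0 : (0 < N)%N.
Implicit Types (u d : 'I_N -> M -> R) (f : {ffun M -> 'I_N}).

Definition min_share_ratio u (i0 : 'I_N) f : R :=
  \big[Num.min/bundle_val (u i0) f i0 / MmS N (u i0)]_(i | MmS N (u i) != 0)
    (bundle_val (u i) f i / MmS N (u i)).

Lemma solves_min_share_ratio u i0 lam f : nonneg_instance u ->
  MmS N (u i0) != 0 -> solves u lam f <-> lam <= min_share_ratio u i0 f.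
Proof.
move=> u_ge0 MmS_i0; have MmS_gt0 i : MmS N (u i) != 0 -> 0 < MmS N (u i).
  by move=> MmS_i; rewrite lt_def MmS_i MmS_ge0.
split=> [lamP|lam_le i].
  by apply: le_bigmin => [|i MmS_i]; rewrite ler_pdivlMr ?MmS_gt0 // lamP.
have [->|MmS_i] := eqVneq (MmS N (u i)) 0; first by rewrite mulr0 sumr_ge0.
rewrite -ler_pdivlMr ?MmS_gt0 //; apply: le_trans lam_le _.
exact: bigmin_le_cond.
Qed.

Lemma nonneg_opt_ratio u : nonneg_instance u ->
  exists l : option R, [/\ opt_ratio_nonneg u l,
    (match l with None => True | Some l => 2 / 3 <= l end) &
    (l = None <-> forall i, MmS N (u i) = 0)].
Proof.
move=> u_ge0; case: (boolP [forall i, MmS N (u i) == 0]) => [/forallP MmS0|].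
  exists None; split=> //=; last by split=> // _ i; apply/eqP.
  by move=> lam; exists [ffun=> Ordinal N_gt0] => i; rewrite (eqP (MmS0 i)) mulr0 sumr_ge0.
rewrite negb_forall => /existsP [i0 MmS_i0].
have ratioP lam f := solves_min_share_ratio lam f u_ge0 MmS_i0.
have [F23 F23P] := two_thirds_allocation N_gt0 u_ge0.
have r23 : 2 / 3 <= min_share_ratio u i0 F23 by apply/ratioP => i; have := F23P i; lra.
have [fm _ fm_max] := @arg_maxP _ _ _ F23 xpredT (min_share_ratio u i0) erefl.
exists (Some (min_share_ratio u i0 fm)); split=> /=.
- split; first by apply: le_trans (fm_max F23 erefl); apply: le_trans r23; lra.
    by exists fm; apply/ratioP.
  by move=> lam _ [f /ratioP lam_le]; apply: le_trans lam_le (fm_max f erefl).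
- exact: le_trans r23 (fm_max F23 erefl).
- by split=> // /(_ i0) /eqP; rewrite (negbTE MmS_i0).
Qed.

Definition max_share_ratio d f : R :=
  \big[Num.max/0]_(i | MmS N (d i) != 0) (bundle_val (d i) f i / MmS N (d i)).

Definition null_shares_met d f :=
  [forall i, (MmS N (d i) == 0) ==> (0 <= bundle_val (d i) f i)].

Lemma solves_max_share_ratio d lam f : nonpos_instance d -> 0 <= lam ->
  solves d lam f <-> null_shares_met d f /\ max_share_ratio d f <= lam.
Proof.
move=> d_le0 lam_ge0; have MmS_lt0 i : MmS N (d i) != 0 -> MmS N (d i) < 0.
  by move=> MmS_i; rewrite lt_def eq_sym MmS_i MmS_le0.
split=> [lamP|[null ratio_le] i].
  split; first by apply/forallP => i; apply/implyP => /eqP MmS_i; have := lamP i; rewrite MmS_i mulr0.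
  by apply: bigmax_le => // i /MmS_lt0 MmS_i; rewrite ler_ndivrMr ?lamP.
have [MmS_i|MmS_i] := eqVneq (MmS N (d i)) 0.
  by rewrite MmS_i mulr0; move/forallP: null => /(_ i); rewrite MmS_i eqxx.
rewrite -ler_ndivrMr ?MmS_lt0 //; apply: le_trans ratio_le.
exact: le_bigmax_cond.
Qed.

Lemma MmS_eq0_nonpos (v : M -> R) : (forall x, v x <= 0) -> MmS N v = 0 -> forall x : M, v x = 0.
Proof.
move=> v_le0 MmS0 x; apply/eqP; rewrite eq_le v_le0 /= -MmS0.
exact: MmS_le_item.
Qed.

Lemma nonpos_opt_ratio d : nonpos_instance d ->
  exists l : R, [/\ opt_ratio_nonpos d l, 0 <= l, l <= 2 &
    ((exists i, MmS N (d i) = 0) -> l = 0)].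
Proof.
move=> d_le0; have ratioP lam f := solves_max_share_ratio f d_le0 (lam := lam).
have ratio_ge0 f : 0 <= max_share_ratio d f by apply: bigmax_ge_id.
have [F2 F2P] := twice_chores_allocation N_gt0 d_le0.
have [null2 ratio2] : null_shares_met d F2 /\ max_share_ratio d F2 <= 2.
  by apply/ratioP => // i; apply: F2P.
have [fm null_fm fm_min] := @arg_minP _ _ _ F2 (null_shares_met d) (max_share_ratio d) null2.
have fm_opt lam : 0 <= lam -> solvable d lam -> max_share_ratio d fm <= lam.
  by move=> lam_ge0 [f /(ratioP _ _ lam_ge0) [null_f ratio_f]]; apply: le_trans (fm_min f null_f) ratio_f.
exists (max_share_ratio d fm); split=> //.
- by split=> //; exists fm; apply/ratioP.
- exact: le_trans (fm_min F2 null2) ratio2.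
move=> [i MmS_i]; apply/eqP; rewrite eq_le ratio_ge0 andbT fm_opt //.
exists [ffun=> i] => j; rewrite mul0r /bundle_val big1 // => x.
by rewrite ffunE => /eqP <-; apply: MmS_eq0_nonpos (d_le0 i) MmS_i x.
Qed.

End OptimalRatio.

Theorem lemma4 (R : realFieldType) (M : finType) (N : nat) (hN : (0 < N)%N) :
  (forall u : 'I_N -> M -> R, nonneg_instance u ->
     exists l : option R,
       [/\ opt_ratio_nonneg u l,
           (match l with None => True | Some l => 2 / 3 <= l end) &
           (l = None <-> forall i : 'I_N, MmS N (u i) = 0)])
  /\
  (forall d : 'I_N -> M -> R, nonpos_instance d ->
     exists l : R,
       [/\ opt_ratio_nonpos d l, 0 <= l, l <= 2 &
           ((exists i : 'I_N, MmS N (d i) = 0) -> l = 0)]).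
Proof.
by split=> [u|d]; [apply: (nonneg_opt_ratio hN) | apply: (nonpos_opt_ratio hN)].
Qed.
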